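(* Let $\mathcal{K}$ be a set of finite subsets of $\mathcal{G}$ satisfying (K$_{\supseteq}^{\mathrm{fin}}$) and (K$_{\mathrm{AddPair}}$). Then $\mathcal{K}$ satisfies (K$_{\mathrm{Add}}$): if $A_1,\ldots,A_n\in\mathcal{K}$ and for each $\langle g_1,\ldots,g_n\rangle\in A_1\times\cdots\times A_n$, $f_{\langle g_1,\ldots,g_n\rangle}$ is some member of $\mathrm{posi}(\{g_1,\ldots,g_n\})$, then $\{f_{\langle g_1,\ldots,g_n\rangle}:\langle g_1,\ldots,g_n\rangle\in A_1\times\cdots\times A_n\}\in\mathcal{K}$.
   Context: $\Omega$ is a non-empty set and $\mathcal{G}$ is the set of bounded functions $\Omega\to\mathbb{R}$. $\mathrm{posi}(B)=\{\sum_{i=1}^m\lambda_i h_i: m\geq1,\lambda_i>0,h_i\in B\}$. Here all gamble sets are finite. (K$_{\supseteq}^{\mathrm{fin}}$): if $A\in\mathcal{K}$ and $B\supseteq A$ is a finite subset of $\mathcal{G}$, then $B\in\mathcal{K}$. (K$_{\mathrm{AddPair}}$): if $A_1,A_2\in\mathcal{K}$ and for each pair $g_1\in A_1,g_2\in A_2$, $f_{\langle g_1,g_2\rangle}$ is some member of $\mathrm{posi}(\{g_1,g_2\})$, then $\{f_{\langle g_1,g_2\rangle}: g_1\in A_1,g_2\in A_2\}\in\mathcal{K}$. *)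

From Stdlib Require Import Reals List.
Import ListNotations.
Open Scope R_scope.

Definition bounded {Omega : Type} (f : Omega -> R) : Prop :=
  exists c : R, forall w, Rabs (f w) <= c.

Definition gamble (Omega : Type) : Type := {f : Omega -> R | bounded f}.

Definition gset (Omega : Type) : Type := gamble Omega -> Prop.

Definition finite_gset {Omega : Type} (A : gset Omega) : Prop :=
  exists l : list (gamble Omega), forall g, A g <-> In g l.

(* posi(B) = { sum_{i=1}^m lambda_i h_i : m >= 1, lambda_i > 0, h_i in B }.
   A positive combination is encoded by a non-empty list of pairs (lambda_i, h_i). *)
Definition posi {Omega : Type} (B : gset Omega) : gset Omega :=
  fun f => exists l : list (R * gamble Omega),
    l <> [] /\
    Forall (fun p => 0 < fst p /\ B (snd p)) l /\
    forall w, proj1_sig f w =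
      fold_right (fun p acc => fst p * proj1_sig (snd p) w + acc) 0 l.

Definition pair_gset {Omega : Type} (g1 g2 : gamble Omega) : gset Omega :=
  fun h => h = g1 \/ h = g2.

Definition list_gset {Omega : Type} (gs : list (gamble Omega)) : gset Omega :=
  fun h => In h gs.

Definition incl_gset {Omega : Type} (A B : gset Omega) : Prop :=
  forall g, A g -> B g.

Definition K_supset_fin {Omega : Type} (K : gset Omega -> Prop) : Prop :=
  forall A B : gset Omega, K A -> finite_gset B -> incl_gset A B -> K B.

(* (K_AddPair): f assigns to each pair (g1,g2) a gamble; only its values on
   A1 x A2 matter. *)
Definition K_AddPair {Omega : Type} (K : gset Omega -> Prop) : Prop :=
  forall (A1 A2 : gset Omega) (f : gamble Omega -> gamble Omega -> gamble Omega),
    K A1 -> K A2 ->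
    (forall g1 g2, A1 g1 -> A2 g2 -> posi (pair_gset g1 g2) (f g1 g2)) ->
    K (fun h => exists g1 g2, A1 g1 /\ A2 g2 /\ h = f g1 g2).

(* (K_Add): the list As = [A_1; ...; A_n]; tuples <g_1,...,g_n> in
   A_1 x ... x A_n are lists gs with Forall2 (fun A g => A g) As gs. *)
Definition K_Add {Omega : Type} (K : gset Omega -> Prop) : Prop :=
  forall (As : list (gset Omega)) (f : list (gamble Omega) -> gamble Omega),
    Forall K As ->
    (forall gs, Forall2 (fun A g => A g) As gs -> posi (list_gset gs) (f gs)) ->
    K (fun h => exists gs, Forall2 (fun A g => A g) As gs /\ h = f gs).

From Pilot Require Import Defs.
From Stdlib Require Import Reals List Lra Classical ClassicalEpsilon.
Import ListNotations.
Open Scope R_scope.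

(* The gambles occurring in A_1, ..., A_n form a finite list H.  We show, by
   induction on a list H, that a finite set T belongs to K as soon as every
   tuple <g_1, ..., g_n> admits some h in T that is either a positive
   multiple of a single g_i or a positive combination of those g_i lying in H.
   For H = [] some A_i has all of its elements dominated by T, and pairing A_i
   with itself puts T in K.  For H = a :: H', each such h is split as
   h = u + v with u a positive multiple of a and v free of a; the sets of
   first parts (a, or h itself) and of second parts (v, or h itself) are in K
   by induction, and pairing them yields members of T. *)

Section PositiveCombinations.

Context {Omega : Type}.

Definition comb_fun (l : list (R * gamble Omega)) (w : Omega) : R :=
  fold_right (fun p acc => fst p * proj1_sig (snd p) w + acc) 0 l.

Lemma comb_fun_bounded (l : list (R * gamble Omega)) : Defs.bounded (comb_fun l).
Proof.
  induction l as [|[c [g [b Hb]]] l [M HM]].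
  - exists 0; intro w; unfold comb_fun; simpl; rewrite Rabs_R0; lra.
  - exists (Rabs c * b + M); intro w; unfold comb_fun; simpl.
    eapply Rle_trans; [apply Rabs_triang|]; rewrite Rabs_mult.
    apply Rplus_le_compat; [apply Rmult_le_compat_l; [apply Rabs_pos|apply Hb]|apply HM].
Qed.

Definition comb (l : list (R * gamble Omega)) : gamble Omega :=
  exist _ (comb_fun l) (comb_fun_bounded l).

Lemma comb_fun_app (l1 l2 : list (R * gamble Omega)) (w : Omega) :
  comb_fun (l1 ++ l2) w = comb_fun l1 w + comb_fun l2 w.
Proof.
  induction l1 as [|p l1 IH]; unfold comb_fun in *; simpl; [ring|rewrite IH; ring].
Qed.

Lemma comb_fun_filter (p : R * gamble Omega -> bool) (l : list (R * gamble Omega))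
  (w : Omega) :
  comb_fun l w = comb_fun (filter p l) w + comb_fun (filter (fun q => negb (p q)) l) w.
Proof.
  induction l as [|q l IH]; unfold comb_fun in *; simpl; [ring|].
  destruct (p q); simpl; rewrite IH; ring.
Qed.

Lemma posi_mono (B C : gset Omega) : incl_gset B C -> incl_gset (posi B) (posi C).
Proof.
  intros HBC h [l [Hne [Hl Hh]]]; exists l; split; [exact Hne|split; [|exact Hh]].
  eapply Forall_impl; [|exact Hl]; intros p [Hp HB]; auto.
Qed.

Lemma posi_self (B : gset Omega) (x : gamble Omega) : B x -> posi B x.
Proof.
  intro Hx; exists [(1, x)]; split; [discriminate|split].
  - repeat constructor; simpl; [lra|exact Hx].
  - intro w; simpl; ring.
Qed.

Lemma posi_inhabited (B : gset Omega) (h : gamble Omega) : posi B h -> exists g, B g.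
Proof.
  intros [[|p l] [Hne [Hl _]]]; [contradiction|].
  inversion Hl as [|? ? [_ Hp]]; eauto.
Qed.

Lemma posi_add (B : gset Omega) (u v h : gamble Omega) :
  posi B u -> posi B v ->
  (forall w, proj1_sig h w = proj1_sig u w + proj1_sig v w) -> posi B h.
Proof.
  intros [lu [Hne [Hlu Hu]]] [lv [_ [Hlv Hv]]] Hh; exists (lu ++ lv); split.
  - destruct lu; [contradiction|discriminate].
  - split; [apply Forall_app; auto|].
    intro w; rewrite Hh, Hu, Hv; symmetry; apply comb_fun_app.
Qed.

Lemma posi_split (B : gset Omega) (P : gamble Omega -> Prop) (h : gamble Omega) :
  posi B h ->
  posi (fun g => B g /\ P g) h \/ posi (fun g => B g /\ ~ P g) h \/
  exists u v, posi (fun g => B g /\ P g) u /\ posi (fun g => B g /\ ~ P g) v /\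
    forall w, proj1_sig h w = proj1_sig u w + proj1_sig v w.
Proof.
  intros [l [Hne [Hl Hh]]].
  set (p := fun q : R * gamble Omega =>
              if excluded_middle_informative (P (snd q)) then true else false).
  set (lP := filter p l); set (lN := filter (fun q => negb (p q)) l).
  assert (HP : Forall (fun q => 0 < fst q /\ B (snd q) /\ P (snd q)) lP).
  { apply Forall_forall; intros q Hq; apply filter_In in Hq as [Hq Hpq].
    rewrite Forall_forall in Hl; destruct (Hl q Hq); unfold p in Hpq.
    destruct excluded_middle_informative; [auto|discriminate]. }
  assert (HN : Forall (fun q => 0 < fst q /\ B (snd q) /\ ~ P (snd q)) lN).
  { apply Forall_forall; intros q Hq; apply filter_In in Hq as [Hq Hpq].
    rewrite Forall_forall in Hl; destruct (Hl q Hq); unfold p in Hpq.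
    destruct excluded_middle_informative; [discriminate|auto]. }
  assert (Hsum : forall w, proj1_sig h w = comb_fun lP w + comb_fun lN w).
  { intro w; rewrite Hh; apply comb_fun_filter. }
  assert (Hboth : lP <> [] \/ lN <> []).
  { destruct l as [|q l]; [contradiction|]; unfold lP, lN; simpl.
    destruct (p q); [left|right]; discriminate. }
  destruct lN as [|qN lN'] eqn:EN; [|destruct lP as [|qP lP'] eqn:EP].
  - left; exists lP; split; [destruct Hboth; congruence|split].
    + eapply Forall_impl; [|exact HP]; simpl; tauto.
    + intro w; rewrite Hsum; unfold comb_fun; simpl; ring.
  - right; left; exists (qN :: lN'); split; [discriminate|split].
    + eapply Forall_impl; [|exact HN]; simpl; tauto.
    + intro w; rewrite Hsum; unfold comb_fun; simpl; ring.
  - right; right; exists (comb (qP :: lP')), (comb (qN :: lN')); split; [|split].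
    + exists (qP :: lP'); split; [discriminate|split; [|reflexivity]].
      eapply Forall_impl; [|exact HP]; simpl; tauto.
    + exists (qN :: lN'); split; [discriminate|split; [|reflexivity]].
      eapply Forall_impl; [|exact HN]; simpl; tauto.
    + exact Hsum.
Qed.

End PositiveCombinations.

Section Products.

Context {Omega : Type}.

Definition in_prod (As : list (gset Omega)) (gs : list (gamble Omega)) : Prop :=
  Forall2 (fun A g => A g) As gs.

Lemma in_prod_enum (As : list (gset Omega)) :
  Forall finite_gset As -> exists ll, forall gs, in_prod As gs <-> In gs ll.
Proof.
  induction 1 as [|A As [lA HA] _ [ll Hll]].
  - exists [[]]; intro gs; split.
    + inversion 1; left; reflexivity.
    + intros [<-|[]]; constructor.
  - exists (flat_map (fun g => map (cons g) ll) lA); intro gs; split.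
    + inversion 1 as [|? g ? gs' HAg Hgs']; subst.
      apply in_flat_map; exists g; split; [apply HA, HAg|].
      apply in_map, Hll, Hgs'.
    + intro H; apply in_flat_map in H as [g [Hg Hm]].
      apply in_map_iff in Hm as [gs' [<- Hgs']].
      constructor; [apply HA, Hg|apply Hll, Hgs'].
Qed.

Lemma finite_prod_image (As : list (gset Omega))
  (F : list (gamble Omega) -> gamble Omega) :
  Forall finite_gset As ->
  finite_gset (fun h => exists gs, in_prod As gs /\ h = F gs).
Proof.
  intro HAs; destruct (in_prod_enum As HAs) as [ll Hll]; exists (map F ll).
  intro h; split.
  - intros [gs [Hgs ->]]; apply in_map, Hll, Hgs.
  - intro H; apply in_map_iff in H as [gs [<- Hgs]].
    exists gs; split; [apply Hll, Hgs|reflexivity].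
Qed.

Lemma in_prod_exists (As : list (gset Omega)) (Q : gamble Omega -> Prop) :
  (forall A, In A As -> exists g, A g /\ Q g) ->
  exists gs, in_prod As gs /\ Forall Q gs.
Proof.
  induction As as [|A As IH]; intro H.
  - exists []; split; constructor.
  - destruct (H A (or_introl eq_refl)) as [g [Hg Qg]].
    destruct IH as [gs [Hgs HQ]]; [intros B HB; apply H; right; exact HB|].
    exists (g :: gs); split; constructor; auto.
Qed.

Lemma in_prod_In (As : list (gset Omega)) (gs : list (gamble Omega)) (g : gamble Omega) :
  in_prod As gs -> In g gs -> exists A, In A As /\ A g.
Proof.
  induction 1 as [|A g' As gs Hg _ IH]; [intros []|intros [<-|Hin]].
  - exists A; split; [left; reflexivity|exact Hg].
  - destruct (IH Hin) as [B [HB HBg]]; exists B; split; [right; exact HB|exact HBg].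
Qed.

Lemma finite_gset_cover (As : list (gset Omega)) :
  Forall finite_gset As -> exists H, forall A g, In A As -> A g -> In g H.
Proof.
  induction 1 as [|A As [l Hl] _ [H IH]].
  - exists []; intros A g [].
  - exists (l ++ H); intros B g [<-|HB] Hg; apply in_or_app; [left; apply Hl, Hg|].
    right; exact (IH B g HB Hg).
Qed.

End Products.

Section AdditivityFromPairs.

Context {Omega : Type} (K : gset Omega -> Prop).
Hypothesis Kfin : forall A, K A -> finite_gset A.
Hypothesis Hsup : K_supset_fin K.
Hypothesis Hpair : K_AddPair K.

Lemma K_pair_cover (T1 T2 T : gset Omega) :
  K T1 -> K T2 -> finite_gset T ->
  (forall x y, T1 x -> T2 y -> exists h, T h /\ posi (pair_gset x y) h) -> K T.
Proof.
  intros K1 K2 HT Hcov.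
  destruct (choice (fun xy h => T1 (fst xy) -> T2 (snd xy) ->
                      T h /\ posi (pair_gset (fst xy) (snd xy)) h)) as [out Hout].
  { intros [x y]; simpl.
    destruct (excluded_middle_informative (T1 x /\ T2 y)) as [[Hx Hy]|Hn].
    - destruct (Hcov x y Hx Hy) as [h Hh]; exists h; auto.
    - exists x; tauto. }
  apply (Hsup _ T (Hpair T1 T2 (fun x y => out (x, y)) K1 K2
                     (fun x y Hx Hy => proj2 (Hout (x, y) Hx Hy)))); [exact HT|].
  intros h [x [y [Hx [Hy ->]]]]; exact (proj1 (Hout (x, y) Hx Hy)).
Qed.

Definition spanned_by (H gs : list (gamble Omega)) (h : gamble Omega) : Prop :=
  posi (fun g => In g gs /\ In g H) h \/ exists g, In g gs /\ posi (fun x => x = g) h.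

Definition split_at (a h x y : gamble Omega) : Prop :=
  (x = h /\ y = h) \/
  (x = a /\ exists u, posi (fun g => g = a) u /\
     forall w, proj1_sig h w = proj1_sig u w + proj1_sig y w).

Lemma spanned_by_cons_split (a : gamble Omega) (H gs : list (gamble Omega))
  (h : gamble Omega) :
  spanned_by (a :: H) gs h ->
  exists x y, split_at a h x y /\ spanned_by H gs x /\ spanned_by H gs y.
Proof.
  intros [Hh|Hh]; [|exists h, h; split; [left; auto|split; right; exact Hh]].
  assert (Hfree : incl_gset (fun g => (In g gs /\ In g (a :: H)) /\ g <> a)
                           (fun g => In g gs /\ In g H)).
  { intros g [[Hg [<-|HgH]] Hga]; [contradiction|split; assumption]. }
  destruct (posi_split _ (fun g => g = a) h Hh)
    as [Ha|[Hna|[u [v [Hu [Hv Huv]]]]]].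
  - exists h, h; split; [left; auto|].
    destruct (posi_inhabited _ _ Ha) as [g [[Hg _] ->]].
    assert (Hs : spanned_by H gs h).
    { right; exists a; split; [exact Hg|].
      exact (posi_mono _ _ (fun x Hx => proj2 Hx) h Ha). }
    auto.
  - exists h, h; split; [left; auto|].
    assert (Hs : spanned_by H gs h) by (left; exact (posi_mono _ _ Hfree h Hna)).
    auto.
  - exists a, v; split; [|split].
    + right; split; [reflexivity|].
      exists u; split; [exact (posi_mono _ _ (fun x Hx => proj2 Hx) u Hu)|exact Huv].
    + right; exists a; split; [|apply posi_self; reflexivity].
      destruct (posi_inhabited _ _ Hu) as [g [[Hg _] ->]]; exact Hg.
    + left; exact (posi_mono _ _ Hfree v Hv).
Qed.

Lemma split_at_pair (T : gset Omega) (a h1 h2 x x' y' y : gamble Omega) :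
  T h1 -> T h2 -> split_at a h1 x x' -> split_at a h2 y' y ->
  exists h, T h /\ posi (pair_gset x y) h.
Proof.
  intros Th1 Th2 [[-> _]|[-> _]] S2.
  - exists h1; split; [exact Th1|apply posi_self; left; reflexivity].
  - exists h2; split; [exact Th2|].
    destruct S2 as [[_ ->]|[_ [u [Hu Huy]]]]; [apply posi_self; right; reflexivity|].
    apply (posi_add _ u y h2); [|apply posi_self; right; reflexivity|exact Huy].
    exact (posi_mono _ _ (fun g e => or_introl e) u Hu).
Qed.

Lemma K_of_spanned_by_nil (As : list (gset Omega)) (T : gset Omega) :
  Forall K As -> finite_gset T ->
  (forall gs, in_prod As gs -> exists h, T h /\ spanned_by [] gs h) -> K T.
Proof.
  intros HK HT Hsp.
  assert (HA : exists A, In A As /\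
                 forall g, A g -> exists h, T h /\ posi (fun x => x = g) h).
  { apply NNPP; intro Hn.
    destruct (in_prod_exists As (fun g => ~ exists h, T h /\ posi (fun x => x = g) h))
      as [gs [Hgs HQ]].
    { intros A HA; apply NNPP; intro Hn2; apply Hn; exists A; split; [exact HA|].
      intros g Hg; apply NNPP; intro Hng; apply Hn2; eauto. }
    rewrite Forall_forall in HQ.
    destruct (Hsp gs Hgs) as [h [Th [Hh|[g [Hg Hh]]]]].
    - destruct (posi_inhabited _ _ Hh) as [g [_ []]].
    - apply (HQ g Hg); eauto. }
  destruct HA as [A [HA HAT]].
  assert (KA : K A) by (rewrite Forall_forall in HK; auto).
  apply (K_pair_cover A A T KA KA HT); intros x y Hx _.
  destruct (HAT x Hx) as [h [Th Hh]]; exists h; split; [exact Th|].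
  exact (posi_mono _ _ (fun g e => or_introl e) h Hh).
Qed.

Lemma K_of_spanned_by (H : list (gamble Omega)) (As : list (gset Omega))
  (T : gset Omega) :
  Forall K As -> finite_gset T ->
  (forall gs, in_prod As gs -> exists h, T h /\ spanned_by H gs h) -> K T.
Proof.
  revert T; induction H as [|a H IH]; intros T HK HT Hsp;
    [exact (K_of_spanned_by_nil As T HK HT Hsp)|].
  destruct (choice (fun gs xy => in_prod As gs -> exists h, T h /\
              split_at a h (fst xy) (snd xy) /\
              spanned_by H gs (fst xy) /\ spanned_by H gs (snd xy))) as [F HF].
  { intro gs; destruct (excluded_middle_informative (in_prod As gs)) as [Hgs|];
      [|exists (a, a); tauto].
    destruct (Hsp gs Hgs) as [h [Th Hh]].
    destruct (spanned_by_cons_split a H gs h Hh) as [x [y Hxy]].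
    exists (x, y); intros _; exists h; auto. }
  assert (HAs : Forall finite_gset As) by exact (Forall_impl _ Kfin HK).
  apply (K_pair_cover (fun x => exists gs, in_prod As gs /\ x = fst (F gs))
                      (fun y => exists gs, in_prod As gs /\ y = snd (F gs)) T);
    [| |exact HT|].
  - apply (IH _ HK (finite_prod_image As _ HAs)); intros gs Hgs.
    destruct (HF gs Hgs) as [h [_ [_ [Hx _]]]]; eauto.
  - apply (IH _ HK (finite_prod_image As _ HAs)); intros gs Hgs.
    destruct (HF gs Hgs) as [h [_ [_ [_ Hy]]]]; eauto.
  - intros x y [gs1 [Hgs1 ->]] [gs2 [Hgs2 ->]].
    destruct (HF gs1 Hgs1) as [h1 [Th1 [S1 _]]].
    destruct (HF gs2 Hgs2) as [h2 [Th2 [S2 _]]].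
    exact (split_at_pair T a h1 h2 _ _ _ _ Th1 Th2 S1 S2).
Qed.

End AdditivityFromPairs.

Theorem mainTheorem5 (Omega : Type) (HOmega : inhabited Omega)
  (K : gset Omega -> Prop)
  (Kfin : forall A, K A -> finite_gset A)
  (Hsup : K_supset_fin K) (Hpair : K_AddPair K) :
  K_Add K.
Proof.
  intros As f HK Hf.
  assert (HAs : Forall finite_gset As) by exact (Forall_impl _ Kfin HK).
  destruct (finite_gset_cover As HAs) as [H HH].
  apply (K_of_spanned_by K Kfin Hsup Hpair H As _ HK (finite_prod_image As f HAs)).
  intros gs Hgs; exists (f gs); split; [exists gs; auto|left].
  apply (posi_mono (list_gset gs)); [|exact (Hf gs Hgs)].
  intros g Hg; split; [exact Hg|].
  destruct (in_prod_In As gs g Hgs Hg) as [A [HA HAg]]; exact (HH A g HA HAg).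
Qed.
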